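(* Let $0<\alpha<1$ and $\epsilon\ge 0$. For $i\in[l]$ let $\rho_i$ be a quantum state on a finite-dimensional Hilbert space $\mathcal H$ and $\Pi_i$ an orthogonal projector on $\mathcal H$ with $\operatorname{Tr}[\Pi_i\rho_i]\ge 1-\epsilon$. Let $\tilde{\mathcal H}=\mathcal H\oplus\mathcal H_1\oplus\cdots\oplus\mathcal H_l$ be as in the context, and view operators on $\mathcal H$ as operators on $\tilde{\mathcal H}$ via the identity embedding. Then there is an orthogonal projector $\hat\Pi$ on $\tilde{\mathcal H}$ such that $\operatorname{Tr}[\hat\Pi\rho_i]\ge 1-\epsilon-\alpha$ for all $i\in[l]$, and for every state $\sigma$ on $\mathcal H$, $$\operatorname{Tr}[\hat\Pi\sigma]\ \le\ \frac{1-\alpha}{\alpha}\sum_{i\in[l]}\operatorname{Tr}[\Pi_i\sigma].$$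
   Context: $\mathcal{H}_1,\ldots,\mathcal{H}_l$ are Hilbert spaces each of dimension $\dim\mathcal{H}$ and $\tilde{\mathcal{H}}:=\mathcal{H}\oplus\mathcal{H}_1\oplus\cdots\oplus\mathcal{H}_l$ is the orthogonal direct sum. *)

(* Scalars: an arbitrary numClosedFieldType C (e.g. algC),
   i.e. an algebraically closed field with an order/norm and conjugation. *)
From mathcomp Require Import all_boot all_order all_algebra.
Set Implicit Arguments. Unset Strict Implicit. Unset Printing Implicit Defensive.
Import Order.TTheory GRing.Theory Num.Theory.
Local Open Scope ring_scope.

Definition adjmx (C : numClosedFieldType) (m n : nat) (A : 'M[C]_(m, n)) : 'M[C]_(n, m) :=
  (map_mx Num.conj A)^T.

Definition is_psd (C : numClosedFieldType) (n : nat) (A : 'M[C]_n) : Prop :=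
  adjmx A = A /\ forall v : 'cV[C]_n, 0 <= (adjmx v *m A *m v) 0 0.

Definition is_state (C : numClosedFieldType) (n : nat) (A : 'M[C]_n) : Prop :=
  is_psd A /\ \tr A = 1.

Definition is_proj (C : numClosedFieldType) (n : nat) (P : 'M[C]_n) : Prop :=
  adjmx P = P /\ P *m P = P.

(* H~ = H (+) H_1 (+) ... (+) H_l, each of dimension d, has dimension d + l*d;
   operators on H embed into the top-left block (identity embedding of H). *)
Definition embed (C : numClosedFieldType) (d l : nat) (A : 'M[C]_d) : 'M[C]_(d + l * d) :=
  block_mx A 0 0 0.

(* Let S = \sum_i Pi_i and c = alpha/(1-alpha). The operator A = S (S + c)^-1 satisfies
   0 <= A <= 1, so it is the compression of a projector on H (+) H (Naimark dilation), and
   H (+) H sits inside H~ as soon as l > 0. On one side A <= S / c. On the other side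
   S >= Pi_i and antitonicity of the inverse give (S + c)^-1 <= (Pi_i + c)^-1
   = c^-1 (1 - (1 - alpha) Pi_i), i.e. A >= (1 - alpha) Pi_i. *)
From mathcomp Require Import all_boot all_order all_algebra.
From mathcomp Require Import ring.
Set Implicit Arguments. Unset Strict Implicit. Unset Printing Implicit Defensive.
Import Order.TTheory GRing.Theory Num.Theory.
Local Open Scope ring_scope.

Section Adjoint.
Variable C : numClosedFieldType.

Lemma adjmxK m n (A : 'M[C]_(m, n)) : adjmx (adjmx A) = A.
Proof. by apply/matrixP=> i j; rewrite !mxE conjCK. Qed.

Lemma adjmxM m n p (A : 'M[C]_(m, n)) (B : 'M[C]_(n, p)) :
  adjmx (A *m B) = adjmx B *m adjmx A.
Proof. by rewrite /adjmx map_mxM trmx_mul. Qed.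

Lemma adjmxD m n (A B : 'M[C]_(m, n)) : adjmx (A + B) = adjmx A + adjmx B.
Proof. by apply/matrixP=> i j; rewrite !mxE rmorphD. Qed.

Lemma adjmxB m n (A B : 'M[C]_(m, n)) : adjmx (A - B) = adjmx A - adjmx B.
Proof. by apply/matrixP=> i j; rewrite !mxE rmorphB. Qed.

Lemma adjmxZ m n k (A : 'M[C]_(m, n)) : adjmx (k *: A) = k^* *: adjmx A.
Proof. by apply/matrixP=> i j; rewrite !mxE rmorphM. Qed.

Lemma adjmx1 n : adjmx (1%:M : 'M[C]_n) = 1%:M.
Proof. by apply/matrixP=> i j; rewrite !mxE eq_sym rmorphMn rmorph1. Qed.

Lemma adjmx0 m n : adjmx (0 : 'M[C]_(m, n)) = 0.
Proof. by apply/matrixP=> i j; rewrite !mxE rmorph0. Qed.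

Lemma adjmx_block m1 m2 n1 n2 (A : 'M[C]_(m1, n1)) (B : 'M[C]_(m1, n2))
  (D : 'M[C]_(m2, n1)) (E : 'M[C]_(m2, n2)) :
  adjmx (block_mx A B D E) = block_mx (adjmx A) (adjmx D) (adjmx B) (adjmx E).
Proof. by rewrite /adjmx map_block_mx tr_block_mx. Qed.

Lemma adjmx_diag n (x : 'rV[C]_n) : (forall k, x 0 k \is Num.real) ->
  adjmx (diag_mx x) = diag_mx x.
Proof.
move=> x_real; apply/matrixP=> i j; rewrite !mxE eq_sym.
by case: eqP => [->|]; rewrite ?mulr1n ?mulr0n ?conj_Creal ?rmorph0.
Qed.

End Adjoint.

Section PositiveSemidefinite.
Variable C : numClosedFieldType.

Lemma psd0 n : is_psd (0 : 'M[C]_n).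
Proof. by split=> [|v]; rewrite ?adjmx0 // mulmx0 mul0mx mxE. Qed.

Lemma psdD n (A B : 'M[C]_n) : is_psd A -> is_psd B -> is_psd (A + B).
Proof.
move=> [hA pA] [hB pB]; split; first by rewrite adjmxD hA hB.
by move=> v; rewrite mulmxDr mulmxDl mxE addr_ge0.
Qed.

Lemma psdZ n k (A : 'M[C]_n) : 0 <= k -> is_psd A -> is_psd (k *: A).
Proof.
move=> k_ge0 [hA pA]; split; first by rewrite adjmxZ hA conj_Creal ?ger0_real.
by move=> v; rewrite -scalemxAr -scalemxAl mxE mulr_ge0.
Qed.

Lemma psd_sum n (I : finType) (P : pred I) (F : I -> 'M[C]_n) :
  (forall i, P i -> is_psd (F i)) -> is_psd (\sum_(i | P i) F i).
Proof. by move=> h; apply: (big_ind (@is_psd C n)); [exact: psd0|exact: psdD|]. Qed.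

Lemma psd_sum_sub n (I : finType) (F : I -> 'M[C]_n) j :
  (forall i, is_psd (F i)) -> is_psd (\sum_i F i - F j).
Proof. by move=> F_psd; rewrite (bigD1 j) //= addrC addrK; exact: psd_sum. Qed.

Lemma psd_adj_conj m n (A : 'M[C]_m) (Q : 'M[C]_(m, n)) :
  is_psd A -> is_psd (adjmx Q *m A *m Q).
Proof.
move=> [hA pA]; split; first by rewrite !adjmxM adjmxK hA mulmxA.
by move=> v; have := pA (Q *m v); rewrite adjmxM !mulmxA.
Qed.

Lemma adjmx_mul_ge0 n (w : 'cV[C]_n) : 0 <= (adjmx w *m w) 0 0.
Proof. by rewrite mxE sumr_ge0 // => i _; rewrite !mxE mulrC mul_conjC_ge0. Qed.

Lemma proj_psd n (P : 'M[C]_n) : is_proj P -> is_psd P.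
Proof.
move=> [hP PP]; split=> // v.
have -> : adjmx v *m P *m v = adjmx (P *m v) *m (P *m v).
  by rewrite adjmxM hP -!mulmxA (mulmxA P P) PP.
exact: adjmx_mul_ge0.
Qed.

Lemma psd_diag_ge0 n (A : 'M[C]_n) k : is_psd A -> 0 <= A k k.
Proof.
move=> [_ pA]; have := pA (delta_mx k 0).
have -> : adjmx (delta_mx k 0 : 'cV[C]_n) = delta_mx 0 k.
  by apply/matrixP=> i j; rewrite !mxE rmorphMn rmorph1 andbC.
by rewrite -rowE -colE !mxE.
Qed.

Lemma proj_compl n (P : 'M[C]_n) : is_proj P -> is_proj (1%:M - P).
Proof.
move=> [hP PP]; split; first by rewrite adjmxB adjmx1 hP.
by rewrite mulmxBl !mulmxBr !mul1mx !mulmx1 PP subrr subr0.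
Qed.

Lemma psd_1_sub_proj n (P : 'M[C]_n) t : is_proj P -> 0 <= t <= 1 ->
  is_psd (1%:M - t *: P).
Proof.
move=> P_proj /andP[t_ge0 t_le1].
have -> : 1%:M - t *: P = (1%:M - P) + (1 - t) *: P.
  by rewrite scalerBl scale1r addrA subrK.
apply: psdD; first exact/proj_psd/proj_compl.
by apply: psdZ; [rewrite subr_ge0 | exact: proj_psd].
Qed.

End PositiveSemidefinite.

Section Spectral.
Variable C : numClosedFieldType.

Definition unitary n (U : 'M[C]_n) := U *m adjmx U = 1%:M /\ adjmx U *m U = 1%:M.

Definition diag_in n (U : 'M[C]_n) (x : 'rV[C]_n) := adjmx U *m diag_mx x *m U.

Lemma adjmxE m n (A : 'M[C]_(m, n)) : adjmx A = (A ^t* )%sesqui.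
Proof. by rewrite /adjmx map_trmx. Qed.

Lemma herm_spectral n (A : 'M[C]_n) : adjmx A = A ->
  exists U x, unitary U /\ A = diag_in U x.
Proof.
move=> hA; have A_normal : A \is normalmx by apply/normalmxP; rewrite -adjmxE hA.
have U_unitary := spectral_unitarymx A.
have UU : spectralmx A *m adjmx (spectralmx A) = 1%:M.
  by rewrite adjmxE; apply/unitarymxP.
exists (spectralmx A), (spectral_diag A); split; first by split=> //; exact: mulmx1C.
by rewrite /diag_in adjmxE -invmx_unitary //; exact/orthomx_spectralP.
Qed.

Section DiagIn.
Variables (n : nat) (U : 'M[C]_n).

Lemma diag_inD (x y : 'rV[C]_n) : diag_in U x + diag_in U y = diag_in U (x + y).
Proof. by rewrite /diag_in raddfD mulmxDr mulmxDl. Qed.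

Lemma diag_inB (x y : 'rV[C]_n) : diag_in U x - diag_in U y = diag_in U (x - y).
Proof. by rewrite /diag_in raddfB mulmxBr mulmxBl. Qed.

Lemma diag_inZ k (x : 'rV[C]_n) : k *: diag_in U x = diag_in U (k *: x).
Proof.
rewrite /diag_in; have -> : diag_mx (k *: x) = k *: diag_mx x.
  by apply/matrixP=> i j; rewrite !mxE mulrnAr.
by rewrite scalemxAl scalemxAr.
Qed.

Lemma diag_in_herm (x : 'rV[C]_n) : (forall k, x 0 k \is Num.real) -> adjmx (diag_in U x) = diag_in U x.
Proof. by move=> x_real; rewrite /diag_in !adjmxM adjmxK adjmx_diag // mulmxA. Qed.

Lemma diag_in_psd (x : 'rV[C]_n) : (forall k, 0 <= x 0 k) -> is_psd (diag_in U x).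
Proof.
move=> x_ge0; apply: psd_adj_conj; split.
  by apply: adjmx_diag => k; exact: ger0_real.
move=> v; rewrite mul_mx_diag mxE sumr_ge0 // => i _; rewrite !mxE.
by rewrite mulrAC mulr_ge0 // mulrC mul_conjC_ge0.
Qed.

Hypothesis U_unitary : unitary U.

Lemma diag_inM (x y : 'rV[C]_n) : diag_in U x *m diag_in U y = diag_in U (\row_k (x 0 k * y 0 k)).
Proof.
case: U_unitary => UU _; rewrite /diag_in !mulmxA.
by rewrite -[_ *m U *m adjmx U]mulmxA UU mulmx1 -(mulmxA (adjmx U)) mulmx_diag.
Qed.

Lemma diag_in1 : diag_in U (const_mx 1) = 1%:M.
Proof.
rewrite /diag_in; have -> : diag_mx (const_mx 1 : 'rV[C]_n) = 1%:M.
  by apply/matrixP=> i j; rewrite !mxE.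
by rewrite mulmx1; case: U_unitary.
Qed.

Lemma diag_in_psd_ge0 (x : 'rV[C]_n) k : is_psd (diag_in U x) -> 0 <= x 0 k.
Proof.
case: U_unitary => UU _ /(psd_adj_conj (adjmx U)) /(psd_diag_ge0 k).
by rewrite adjmxK /diag_in !mulmxA UU mul1mx -mulmxA UU mulmx1 mxE eqxx mulr1n.
Qed.

End DiagIn.

Lemma mxtrace_mul_psd_ge0 n (A B : 'M[C]_n) : is_psd A -> is_psd B -> 0 <= \tr (A *m B).
Proof.
move=> A_psd B_psd; have [U [x [[UU U'U] eB]]] := herm_spectral B_psd.1.
have eD : diag_mx x = U *m B *m adjmx U.
  by rewrite eB /diag_in !mulmxA UU mul1mx -mulmxA UU mulmx1.
have A'_psd : is_psd (U *m A *m adjmx U).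
  by have := psd_adj_conj (adjmx U) A_psd; rewrite adjmxK.
have D_psd : is_psd (diag_mx x).
  by rewrite eD; have := psd_adj_conj (adjmx U) B_psd; rewrite adjmxK.
have -> : \tr (A *m B) = \tr (U *m A *m adjmx U *m diag_mx x).
  by rewrite eB /diag_in !mulmxA mxtrace_mulC !mulmxA.
rewrite mul_mx_diag /mxtrace sumr_ge0 // => i _; rewrite mxE.
rewrite mulr_ge0 //; first exact: psd_diag_ge0.
by have := psd_diag_ge0 i D_psd; rewrite mxE eqxx mulr1n.
Qed.

Lemma mxtrace_psd_le n (A B R : 'M[C]_n) : is_psd (B - A) -> is_psd R ->
  \tr (A *m R) <= \tr (B *m R).
Proof.
move=> BA_psd R_psd; rewrite -subr_ge0 -raddfB /= -mulmxBl.
exact: mxtrace_mul_psd_ge0.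
Qed.

End Spectral.

Section OperatorInequalities.
Variable C : numClosedFieldType.

Lemma proj_shift_inv n (P : 'M[C]_n) c : P *m P = P -> c != 0 -> 1 + c != 0 ->
  (c *: 1%:M + P) *m (c^-1 *: (1%:M - (1 + c)^-1 *: P)) = 1%:M.
Proof.
move=> PP c_neq0 c1_neq0.
rewrite mulmxDl -!scalemxAl mul1mx scalerA mulfV // scale1r -scalemxAr mulmxBr mulmx1.
rewrite -scalemxAr PP -{2}[P]scale1r -scalerBl scalerA.
have -> : c^-1 * (1 - (1 + c)^-1) = (1 + c)^-1.
  by field; rewrite c_neq0 c1_neq0.
by rewrite subrK.
Qed.

Lemma psd_inv_antitone n (X Xi Y Yi : 'M[C]_n) :
  X *m Xi = 1%:M -> Y *m Yi = 1%:M -> is_psd Xi -> adjmx Yi = Yi ->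
  is_psd (Y - X) -> is_psd (Xi - Yi).
Proof.
move=> XXi YYi Xi_psd hYi E_psd.
have XiX := mulmx1C XXi; have YiY := mulmx1C YYi.
have hE : adjmx (Y - X) = Y - X by case: E_psd.
have E_XiE : (Y - X) + (Y - X) *m Xi *m (Y - X) = Y *m Xi *m Y - Y.
  rewrite !mulmxBl !mulmxBr XXi mul1mx -(mulmxA Y Xi X) XiX mulmx1.
  by rewrite mul1mx addrC subrK.
have -> : Xi - Yi = adjmx Yi *m ((Y - X) + adjmx (Y - X) *m Xi *m (Y - X)) *m Yi.
  rewrite hYi hE E_XiE mulmxBr mulmxBl YiY mul1mx !mulmxA YiY mul1mx.
  by rewrite -mulmxA YYi mulmx1.
exact/psd_adj_conj/psdD/psd_adj_conj.
Qed.

End OperatorInequalities.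

Section Dilation.
Variable C : numClosedFieldType.

Lemma proj_adj_conj m n (P : 'M[C]_m) (Q : 'M[C]_(m, n)) :
  Q *m adjmx Q = 1%:M -> is_proj P -> is_proj (adjmx Q *m P *m Q).
Proof.
move=> QQ [hP PP]; split; first by rewrite !adjmxM adjmxK hP mulmxA.
by rewrite !mulmxA -[_ *m Q *m adjmx Q]mulmxA QQ mulmx1 -[_ *m P *m P]mulmxA PP.
Qed.

(* Naimark dilation: [[A, sqrt(A(1-A))], [sqrt(A(1-A)), 1-A]] is a projector when 0 <= A <= 1. *)
Lemma dilation_proj n (U : 'M[C]_n) (x : 'rV[C]_n) : unitary U ->
  (forall k, 0 <= x 0 k <= 1) ->
  exists P : 'M[C]_(n + n), is_proj P /\ ulsubmx P = diag_in U x.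
Proof.
move=> U_unitary x01.
pose y := \row_k sqrtC (x 0 k * (1 - x 0 k)); pose x' := \row_k (1 - x 0 k).
have x'_real k : x' 0 k \is Num.real.
  by case/andP: (x01 k) => _ x_le1; rewrite mxE ger0_real // subr_ge0.
have xx'_ge0 k : 0 <= x 0 k * (1 - x 0 k).
  by case/andP: (x01 k) => x_ge0 x_le1; rewrite mulr_ge0 // subr_ge0.
have y_real k : y 0 k \is Num.real by rewrite mxE ger0_real // sqrtC_ge0.
have yy k : y 0 k * y 0 k = x 0 k * (1 - x 0 k) by rewrite mxE -expr2 sqrtCK.
exists (block_mx (diag_in U x) (diag_in U y) (diag_in U y) (diag_in U x'));
  split; last exact: block_mxKul.
split.
  rewrite adjmx_block !diag_in_herm // => k.
  by case/andP: (x01 k) => x_ge0 _; rewrite ger0_real.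
have x'E k : x' 0 k = 1 - x 0 k by rewrite mxE.
clearbody y x'; rewrite mulmx_block !diag_inM // !diag_inD.
by congr block_mx; congr diag_in; apply/rowP=> k; rewrite !mxE ?yy ?x'E; ring.
Qed.

Lemma proj_widen n m k (P : 'M[C]_(n + m)) : is_proj P ->
  exists Q : 'M[C]_(n + (m + k)), is_proj Q /\ ulsubmx Q = ulsubmx P.
Proof.
move=> P_proj; pose T : 'M[C]_(n + m, n + (m + k)) := block_mx 1%:M 0 0 (row_mx 1%:M 0).
have TT : T *m adjmx T = 1%:M.
  rewrite /T adjmx_block /adjmx map_row_mx tr_row_mx -!/(adjmx _) !adjmx1 !adjmx0.
  rewrite mulmx_block mul_row_col !mulmx1 !mulmx0 !mul0mx !addr0 !add0r.
  by rewrite -scalar_mx_block.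
exists (adjmx T *m P *m T); split; first exact: (proj_adj_conj TT P_proj).
rewrite /T -[P]submxK adjmx_block adjmx1 !adjmx0 !mulmx_block !block_mxKul.
by rewrite !mul1mx !mul0mx !mulmx1 !mulmx0 !addr0.
Qed.

Lemma mxtrace_mul_block_ul n m (Q : 'M[C]_(n + m)) (A : 'M[C]_n) :
  \tr (Q *m block_mx A 0 0 0) = \tr (ulsubmx Q *m A).
Proof.
rewrite -{1}[Q]submxK mulmx_block !mulmx0 !addr0.
by rewrite mxtrace_block mxtrace0 addr0.
Qed.

End Dilation.

Definition shrink (C : numClosedFieldType) n (s : 'rV[C]_n) (c : C) :=
  \row_k (s 0 k / (s 0 k + c)).

Section Shrink.
Variables (C : numClosedFieldType) (n : nat) (U : 'M[C]_n) (s : 'rV[C]_n) (c : C).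
Hypotheses (U_unitary : unitary U) (s_ge0 : forall k, 0 <= s 0 k) (c_gt0 : 0 < c).

Let sc_gt0 k : 0 < s 0 k + c. Proof. exact: ltr_wpDl. Qed.

Lemma shrink_bounds k : 0 <= shrink s c 0 k <= 1.
Proof.
have := sc_gt0 k; rewrite mxE => sc_pos.
by rewrite divr_ge0 ?(ltW sc_pos) //= ler_pdivrMr // mul1r lerDl ltW.
Qed.

Lemma psd_scale_sub_shrink : is_psd (c^-1 *: diag_in U s - diag_in U (shrink s c)).
Proof.
rewrite diag_inZ diag_inB; apply: diag_in_psd => k; rewrite !mxE.
rewrite [c^-1 * _]mulrC -mulrBr mulr_ge0 // subr_ge0 lef_pV2 ?posrE //.
by rewrite lerDr.
Qed.

Lemma psd_shrink_sub_proj (P : 'M[C]_n) : is_proj P -> is_psd (diag_in U s - P) ->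
  is_psd (diag_in U (shrink s c) - (1 + c)^-1 *: P).
Proof.
move=> P_proj SP_psd.
have c_neq0 : c != 0 by rewrite gt_eqF.
have c1_gt0 : 0 < 1 + c by rewrite addr_gt0.
pose X := c *: 1%:M + P; pose Xi := c^-1 *: (1%:M - (1 + c)^-1 *: P).
pose Y := diag_in U (\row_k (s 0 k + c)); pose Yi := diag_in U (\row_k (s 0 k + c)^-1).
have XXi : X *m Xi = 1%:M by apply: proj_shift_inv; rewrite ?gt_eqF //; case: P_proj.
have YYi : Y *m Yi = 1%:M.
  rewrite diag_inM // -(diag_in1 U_unitary); congr diag_in; apply/rowP=> k.
  by rewrite !mxE mulfV ?gt_eqF.
have Xi_psd : is_psd Xi.
  apply: psdZ; rewrite ?invr_ge0 ?ltW //; apply: psd_1_sub_proj => //.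
  by rewrite invr_ge0 ltW //= invf_le1 // lerDl ltW.
have Yi_herm : adjmx Yi = Yi.
  by apply: diag_in_herm => k; rewrite mxE ger0_real // invr_ge0 ltW.
have YX : Y - X = diag_in U s - P.
  have -> : Y = diag_in U s + c *: 1%:M.
    rewrite -(diag_in1 U_unitary) diag_inZ diag_inD; congr diag_in; apply/rowP=> k.
    by rewrite !mxE mulr1.
  by rewrite /X opprD addrA addrK.
have eA : diag_in U (shrink s c) = 1%:M - c *: Yi.
  rewrite -(diag_in1 U_unitary) diag_inZ diag_inB; congr diag_in; apply/rowP=> k.
  by rewrite !mxE; field; rewrite gt_eqF.
have -> : diag_in U (shrink s c) - (1 + c)^-1 *: P = c *: (Xi - Yi).
  by rewrite eA scalerBr /Xi scalerA mulfV // scale1r addrAC.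
apply: psdZ (ltW c_gt0) _; apply: psd_inv_antitone XXi YYi Xi_psd Yi_herm _.
by rewrite YX.
Qed.

End Shrink.

Theorem corollary2 (C : numClosedFieldType) (d l : nat) (alpha eps : C)
  (rho Pi : 'I_l -> 'M[C]_d) :
  0 < alpha -> alpha < 1 -> 0 <= eps ->
  (forall i, is_state (rho i)) ->
  (forall i, is_proj (Pi i)) ->
  (forall i, 1 - eps <= \tr (Pi i *m rho i)) ->
  exists Pihat : 'M[C]_(d + l * d),
    is_proj Pihat /\
    (forall i, 1 - eps - alpha <= \tr (Pihat *m embed l (rho i))) /\
    (forall sigma : 'M[C]_d, is_state sigma ->
       \tr (Pihat *m embed l sigma)
         <= (1 - alpha) / alpha * \sum_(i < l) \tr (Pi i *m sigma)).
Proof.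
move=> alpha_gt0 alpha_lt1 eps_ge0 rho_state Pi_proj Pi_rho.
case: l rho Pi rho_state Pi_proj Pi_rho => [|l] rho Pi rho_state Pi_proj Pi_rho.
  exists 0; split; first by split; rewrite ?adjmx0 ?mul0mx.
  by split=> [[] //|sigma _]; rewrite big_ord0 mulr0 mul0mx mxtrace0.
pose S := \sum_i Pi i.
have S_psd : is_psd S by apply: psd_sum => i _; exact: proj_psd.
have [U [s [U_unitary eS]]] := herm_spectral S_psd.1.
have s_ge0 k : 0 <= s 0 k by apply: (diag_in_psd_ge0 U_unitary); rewrite -eS.
pose c := alpha / (1 - alpha).
have c_gt0 : 0 < c by rewrite divr_gt0 // subr_gt0.
have [P [P_proj ulP]] := dilation_proj U_unitary (shrink_bounds s_ge0 c_gt0).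
have [Q [Q_proj ulQ]] := proj_widen (l * d) P_proj.
exists Q; split=> //; split=> [i | sigma [sigma_psd _]];
  rewrite /embed mxtrace_mul_block_ul ulQ ulP.
- have SPi_psd : is_psd (diag_in U s - Pi i).
    by rewrite -eS; apply: psd_sum_sub => j; exact: proj_psd.
  have := mxtrace_psd_le (psd_shrink_sub_proj U_unitary s_ge0 c_gt0 (Pi_proj i) SPi_psd)
    (rho_state i).1.
  apply: le_trans; rewrite -scalemxAl mxtraceZ.
  have -> : (1 + c)^-1 = 1 - alpha.
    by rewrite /c; field; rewrite ?subrK ?oner_neq0 ?gt_eqF ?subr_gt0.
  apply: (le_trans _ (ler_wpM2l _ (Pi_rho i))); last by rewrite subr_ge0 ltW.
  have -> : 1 - eps - alpha = (1 - alpha) * (1 - eps) - alpha * eps by ring.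
  by rewrite gerBl mulr_ge0 // ltW.
- have -> : (1 - alpha) / alpha = c^-1 by rewrite invf_div.
  have -> : \sum_i \tr (Pi i *m sigma) = \tr (S *m sigma) by rewrite mulmx_suml raddf_sum.
  rewrite -mxtraceZ scalemxAl eS.
  by apply: mxtrace_psd_le sigma_psd; exact: psd_scale_sub_shrink.
Qed.
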